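(* Let $\mathcal{X}=\{1,\dots,n\}$ with $n\geq2$, let $\pi$ be a strictly positive probability distribution on $\mathcal{X}$, let $P$ be an ergodic $\pi$-reversible transition matrix, and let $\alpha\in[0,1]$. Let $\mathcal{A}=\{S\subset\mathcal{X}:0<\pi(S)\leq 1/2\}$ and $h(S)=\frac{1}{\pi(S)}\sum_{x\in S,\,y\in S'}\pi(x)P(x,y)$. Let $U^*=\{x^*\}$ be a singleton with $U^*\in\operatorname*{argmax}_{S\in\mathcal{A}}h(S)$, and let $S^*\in\operatorname*{argmin}_{S\in\mathcal{A}}\|A_\alpha(S)-\Pi\|_{F,\pi}^2$. Then $$0\leq\|A_\alpha(U^* )-\Pi\|_{F,\pi}^2-\|A_\alpha(S^* )-\Pi\|_{F,\pi}^2\leq 2\alpha(1-\alpha).$$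
   Context: $S'=\mathcal{X}\setminus S$. $\pi$-reversible means $\pi(x)P(x,y)=\pi(y)P(y,x)$. For $S\neq\emptyset,\mathcal{X}$, $A_\alpha(S)=\alpha P+(1-\alpha)G_S$ where $G_S$ is the Gibbs kernel of the partition $\mathcal{X}=S\sqcup S'$: $G_S(x,y)=\pi(y)/\pi(\mathcal{O}(x))$ if $y\in\mathcal{O}(x)$ and $0$ otherwise, $\mathcal{O}(x)\in\{S,S'\}$ the block containing $x$. $\Pi$ is the matrix with every row equal to $\pi$; $\|M\|_{F,\pi}^2=\operatorname{Tr}(M^*M)$ with $M^*(x,y)=\pi(y)M(y,x)/\pi(x)$. *)

From HB Require Import structures.
From mathcomp Require Import all_boot all_order all_algebra.
Set Implicit Arguments. Unset Strict Implicit. Unset Printing Implicit Defensive.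
Import Order.TTheory GRing.Theory Num.Theory.
Local Open Scope ring_scope.

Section MC.
Variables (R : realFieldType) (n : nat).

Definition piS (pi : 'I_n -> R) (S : {set 'I_n}) : R := \sum_(x in S) pi x.

Definition pos_prob (pi : 'I_n -> R) : Prop :=
  (forall x, 0 < pi x) /\ \sum_x pi x = 1.

Definition stochastic (P : 'M[R]_n) : Prop :=
  (forall x y, 0 <= P x y) /\ (forall x, \sum_y P x y = 1).

Definition reversible (pi : 'I_n -> R) (P : 'M[R]_n) : Prop :=
  forall x y, pi x * P x y = pi y * P y x.

Definition irreducible (P : 'M[R]_n) : Prop :=
  forall x y, exists k : nat, 0 < (P ^+ k) x y.

(* gcd of the return times {t >= 1 : P^t(x,x) > 0} equals 1, for every x *)
Definition aperiodic (P : 'M[R]_n) : Prop :=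
  forall x (d : nat),
    (forall t : nat, (0 < t)%N -> 0 < (P ^+ t) x x -> (d %| t)%N) -> d = 1%N.

Definition ergodic (P : 'M[R]_n) : Prop := irreducible P /\ aperiodic P.

Definition gibbs (pi : 'I_n -> R) (S : {set 'I_n}) : 'M[R]_n :=
  \matrix_(x, y)
    if (y \in S) == (x \in S) then
      pi y / (if x \in S then piS pi S else piS pi (~: S))
    else 0.

Definition Aalpha (pi : 'I_n -> R) (P : 'M[R]_n) (alpha : R)
  (S : {set 'I_n}) : 'M[R]_n :=
  alpha *: P + (1 - alpha) *: gibbs pi S.

Definition PiM (pi : 'I_n -> R) : 'M[R]_n := \matrix_(x, y) pi y.

Definition adj_pi (pi : 'I_n -> R) (M : 'M[R]_n) : 'M[R]_n :=
  \matrix_(x, y) (pi y * M y x / pi x).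

Definition frob2 (pi : 'I_n -> R) (M : 'M[R]_n) : R :=
  \tr (adj_pi pi M *m M).

Definition inA (pi : 'I_n -> R) (S : {set 'I_n}) : Prop :=
  0 < piS pi S <= 2^-1.

Definition hS (pi : 'I_n -> R) (P : 'M[R]_n) (S : {set 'I_n}) : R :=
  (piS pi S)^-1 * \sum_(x in S) \sum_(y in ~: S) pi x * P x y.

End MC.

From HB Require Import structures.
From mathcomp Require Import all_boot all_order all_algebra.
From mathcomp Require Import ring lra.
Import Order.TTheory GRing.Theory Num.Theory.
Set Implicit Arguments. Unset Strict Implicit. Unset Printing Implicit Defensive.
Local Open Scope ring_scope.

(** With the pi-weighted pairing <M, N> = sum_(x,y) pi x M(x,y) N(x,y) / pi y,
    the squared norm is <M, M>, and A_alpha(S) - Pi splits as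
    alpha (P - Pi) + (1 - alpha) (G_S - Pi).  Since rows of P, G_S and Pi are
    probability vectors, <G_S - Pi, G_S - Pi> = <G_S, G_S> - 1 = 1 and, by
    reversibility, <P - Pi, G_S - Pi> = 1 - h(S) - h(S').  Hence the squared
    norm is a constant minus 2 alpha (1 - alpha) (h(S) + h(S')), and the gap
    is 2 alpha (1 - alpha) times h(Sstar) + h(Sstar') - h(U) - h(U'), which
    is at most 1 because h(Sstar') <= h(Sstar) <= h(U) <= 1 and h(U') >= 0. *)

Section FrobeniusForm.
Variables (R : realFieldType) (n : nat) (pi : 'I_n -> R).
Hypothesis pi_gt0 : forall x, 0 < pi x.
Hypothesis pi_sum1 : \sum_x pi x = 1.

Definition frob_dot (M N : 'M[R]_n) : R :=
  \sum_x \sum_y pi x * M x y * N x y / pi y.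

Lemma frob2E M : frob2 pi M = frob_dot M M.
Proof.
rewrite /frob2 /mxtrace /frob_dot.
under eq_bigr => y _ do rewrite mxE.
rewrite exchange_big; apply: eq_bigr => x _; apply: eq_bigr => y _.
by rewrite mxE; ring.
Qed.

Lemma frob_dotC M N : frob_dot M N = frob_dot N M.
Proof. by apply: eq_bigr => x _; apply: eq_bigr => y _; ring. Qed.

Lemma frob_dot_combination a b M N :
  frob_dot (a *: M + b *: N) (a *: M + b *: N)
  = a ^+ 2 * frob_dot M M + b ^+ 2 * frob_dot N N + 2 * a * b * frob_dot M N.
Proof.
rewrite /frob_dot !mulr_sumr -!big_split /=; apply: eq_bigr => x _.
rewrite !mulr_sumr -!big_split /=; apply: eq_bigr => y _.
by rewrite !mxE; ring.
Qed.

Lemma frob_dot_subPi (M N : 'M[R]_n) :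
  (forall x, \sum_y M x y = 1) -> (forall x, \sum_y N x y = 1) ->
  frob_dot (M - PiM pi) (N - PiM pi) = frob_dot M N - 1.
Proof.
move=> M_sum1 N_sum1.
have row_expand x y : pi x * (M - PiM pi) x y * (N - PiM pi) x y / pi y
    = pi x * M x y * N x y / pi y - pi x * M x y - pi x * N x y + pi x * pi y.
  by rewrite !mxE; field; rewrite gt_eqF.
rewrite /frob_dot -[in RHS]pi_sum1 -sumrB; apply: eq_bigr => x _.
under eq_bigr => y _ do rewrite row_expand.
rewrite !big_split /= !sumrN -!mulr_sumr M_sum1 N_sum1 pi_sum1.
ring.
Qed.

End FrobeniusForm.

Definition block {n} (S : {set 'I_n}) (x : 'I_n) : {set 'I_n} :=
  if x \in S then S else ~: S.

Section GibbsKernel.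
Variables (R : realFieldType) (n : nat) (pi : 'I_n -> R).
Hypothesis pi_gt0 : forall x, 0 < pi x.
Hypothesis pi_sum1 : \sum_x pi x = 1.

Lemma sum_setC_split (F : 'I_n -> R) (S : {set 'I_n}) :
  \sum_x F x = \sum_(x in S) F x + \sum_(x in ~: S) F x.
Proof.
rewrite (bigID (mem S)) /=; congr (_ + _).
by apply: eq_bigl => x; rewrite in_setC.
Qed.

Lemma piS_setC (S : {set 'I_n}) : piS pi (~: S) = 1 - piS pi S.
Proof. by rewrite -pi_sum1 (sum_setC_split _ S) /piS addrC addKr. Qed.

Lemma piS_le_setC (S : {set 'I_n}) : inA pi S -> piS pi S <= piS pi (~: S).
Proof. by move=> /andP[_ S_le]; rewrite piS_setC; lra. Qed.

Lemma sum_block (F : {set 'I_n} -> 'I_n -> R) (S : {set 'I_n}) :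
  \sum_x F (block S x) x = \sum_(x in S) F S x + \sum_(x in ~: S) F (~: S) x.
Proof.
rewrite (sum_setC_split _ S); congr (_ + _); apply: eq_bigr => x.
  by rewrite /block => ->.
by rewrite /block in_setC => /negbTE ->.
Qed.

Lemma gibbsE (S : {set 'I_n}) x y :
  gibbs pi S x y = if y \in block S x then pi y / piS pi (block S x) else 0.
Proof.
by rewrite mxE /block; case: (x \in S); rewrite ?in_setC; case: (y \in S).
Qed.

Variable S : {set 'I_n}.
Hypothesis piS_gt0 : 0 < piS pi S.
Hypothesis piSC_gt0 : 0 < piS pi (~: S).

Lemma piS_block_gt0 x : 0 < piS pi (block S x).
Proof. by rewrite /block; case: (x \in S). Qed.

Lemma gibbs_block_sum x : \sum_(y in block S x) gibbs pi S x y = 1.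
Proof.
rewrite (eq_bigr (fun y => pi y / piS pi (block S x))); last first.
  by move=> y y_in; rewrite gibbsE y_in.
by rewrite -mulr_suml divff // gt_eqF // piS_block_gt0.
Qed.

Lemma gibbs_row_sum x : \sum_y gibbs pi S x y = 1.
Proof.
rewrite (bigID (mem (block S x))) /= gibbs_block_sum big1 ?addr0 //.
by move=> y /negbTE y_out; rewrite gibbsE y_out.
Qed.

Lemma frob_dot_gibbsl N :
  frob_dot pi (gibbs pi S) N
  = \sum_x (piS pi (block S x))^-1 * (pi x * \sum_(y in block S x) N x y).
Proof.
apply: eq_bigr => x _; rewrite !mulr_sumr (bigID (mem (block S x))) /=.
rewrite [X in _ + X]big1 ?addr0; last first.
  by move=> y /negbTE y_out; rewrite gibbsE y_out; ring.
apply: eq_bigr => y y_in; rewrite gibbsE y_in.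
by field; rewrite !gt_eqF ?piS_block_gt0.
Qed.

Lemma frob_dot_gibbs : frob_dot pi (gibbs pi S) (gibbs pi S) = 2.
Proof.
rewrite frob_dot_gibbsl.
under eq_bigr => x _ do rewrite gibbs_block_sum mulr1.
rewrite (sum_block (fun B x => (piS pi B)^-1 * pi x)) -!mulr_sumr.
by rewrite !mulVf ?gt_eqF.
Qed.

End GibbsKernel.

Section ReversibleChain.
Variables (R : realFieldType) (n : nat) (pi : 'I_n -> R) (P : 'M[R]_n).
Hypothesis pi_gt0 : forall x, 0 < pi x.
Hypothesis pi_sum1 : \sum_x pi x = 1.
Hypothesis P_ge0 : forall x y, 0 <= P x y.
Hypothesis P_sum1 : forall x, \sum_y P x y = 1.
Hypothesis P_rev : reversible pi P.

Definition flow (S : {set 'I_n}) : R :=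
  \sum_(x in S) \sum_(y in ~: S) pi x * P x y.

Lemma hSE (S : {set 'I_n}) : hS pi P S = flow S / piS pi S.
Proof. exact: mulrC. Qed.

Lemma flow_setC (S : {set 'I_n}) : flow (~: S) = flow S.
Proof.
rewrite /flow setCK exchange_big /=.
by apply: eq_bigr => y _; apply: eq_bigr => x _; rewrite P_rev.
Qed.

Lemma flow_within (S : {set 'I_n}) :
  \sum_(x in S) pi x * \sum_(y in S) P x y = piS pi S - flow S.
Proof.
rewrite /flow /piS -sumrB; apply: eq_bigr => x _.
by rewrite -mulr_sumr -[X in X - _](mulr1 (pi x)) -mulrBr -(P_sum1 x)
  (sum_setC_split _ S) addrK.
Qed.

Lemma flow_ge0 (S : {set 'I_n}) : 0 <= flow S.
Proof.
apply: sumr_ge0 => x _; apply: sumr_ge0 => y _.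
exact: mulr_ge0 (ltW (pi_gt0 x)) (P_ge0 x y).
Qed.

Lemma flow_le_piS (S : {set 'I_n}) : flow S <= piS pi S.
Proof.
rewrite -subr_ge0 -flow_within; apply: sumr_ge0 => x _.
exact: mulr_ge0 (ltW (pi_gt0 x)) (sumr_ge0 _ (fun y _ => P_ge0 x y)).
Qed.

Lemma hS_ge0 (S : {set 'I_n}) : 0 <= hS pi P S.
Proof.
by rewrite hSE divr_ge0 ?flow_ge0 ?sumr_ge0 // => x _; rewrite ltW ?pi_gt0.
Qed.

Lemma hS_le1 (S : {set 'I_n}) : 0 < piS pi S -> hS pi P S <= 1.
Proof. by move=> S_gt0; rewrite hSE ler_pdivrMr // mul1r flow_le_piS. Qed.

Lemma hS_setC_le (S : {set 'I_n}) :
  0 < piS pi S -> piS pi S <= piS pi (~: S) -> hS pi P (~: S) <= hS pi P S.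
Proof.
move=> S_gt0 S_le; rewrite !hSE flow_setC ler_wpM2l ?flow_ge0 //.
by rewrite lef_pV2 ?posrE // (lt_le_trans S_gt0).
Qed.

Lemma frob_dot_gibbs_chain (S : {set 'I_n}) :
  0 < piS pi S -> 0 < piS pi (~: S) ->
  frob_dot pi (gibbs pi S) P = 2 - hS pi P S - hS pi P (~: S).
Proof.
move=> S_gt0 SC_gt0; rewrite frob_dot_gibbsl //.
rewrite (sum_block (fun B x => (piS pi B)^-1 * (pi x * \sum_(y in B) P x y))).
rewrite -!mulr_sumr !flow_within !hSE.
by field; rewrite !gt_eqF.
Qed.

Lemma frob2_Aalpha (S : {set 'I_n}) alpha :
  0 < piS pi S -> 0 < piS pi (~: S) ->
  frob2 pi (Aalpha pi P alpha S - PiM pi)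
  = alpha ^+ 2 * frob2 pi (P - PiM pi) + (1 - alpha) ^+ 2
    + 2 * alpha * (1 - alpha) * (1 - hS pi P S - hS pi P (~: S)).
Proof.
move=> S_gt0 SC_gt0.
have -> : Aalpha pi P alpha S - PiM pi
    = alpha *: (P - PiM pi) + (1 - alpha) *: (gibbs pi S - PiM pi).
  by apply/matrixP => x y; rewrite !mxE; ring.
have G_sum1 := gibbs_row_sum S_gt0 SC_gt0.
rewrite !frob2E frob_dot_combination !frob_dot_subPi //.
rewrite frob_dot_gibbs // [frob_dot pi P (gibbs pi S)]frob_dotC.
by rewrite frob_dot_gibbs_chain //; ring.
Qed.

End ReversibleChain.

Unset Implicit Arguments.

Theorem proposition4p8 (R : realFieldType) (n : nat) (hn : (2 <= n)%N)
  (pi : 'I_n -> R) (P : 'M[R]_n) (alpha : R) (xstar : 'I_n) (Sstar : {set 'I_n}) :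
  pos_prob pi -> stochastic P -> ergodic P -> reversible pi P ->
  0 <= alpha <= 1 ->
  inA pi [set xstar] ->
  (forall S, inA pi S -> hS pi P S <= hS pi P [set xstar]) ->
  inA pi Sstar ->
  (forall S, inA pi S ->
     frob2 pi (Aalpha pi P alpha Sstar - PiM pi)
       <= frob2 pi (Aalpha pi P alpha S - PiM pi)) ->
  0 <= frob2 pi (Aalpha pi P alpha [set xstar] - PiM pi)
         - frob2 pi (Aalpha pi P alpha Sstar - PiM pi)
  /\ frob2 pi (Aalpha pi P alpha [set xstar] - PiM pi)
         - frob2 pi (Aalpha pi P alpha Sstar - PiM pi)
     <= 2 * alpha * (1 - alpha).
Proof.
move=> [pi_gt0 pi_sum1] [P_ge0 P_sum1] _ P_rev /andP[a_ge0 a_le1].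
move=> U_inA hU_max S_inA frob_min.
split; first by rewrite subr_ge0 frob_min.
have [U_gt0 _] := andP U_inA; have [S_gt0 _] := andP S_inA.
have U_le := piS_le_setC pi_sum1 U_inA; have S_le := piS_le_setC pi_sum1 S_inA.
rewrite !frob2_Aalpha ?(lt_le_trans U_gt0 U_le) ?(lt_le_trans S_gt0 S_le) //.
rewrite [X in X - _]addrC addrKA -mulrBr -[leRHS]mulr1.
rewrite ler_wpM2l ?mulr_ge0 ?subr_ge0 //.
have hSC_le_hS := hS_setC_le pi_gt0 P_ge0 P_rev S_gt0 S_le.
have hS_le_hU := hU_max _ S_inA.
have hU_le1 := hS_le1 pi_gt0 P_ge0 P_sum1 U_gt0.
have hUC_ge0 := hS_ge0 pi_gt0 P_ge0 (~: [set xstar]).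
lra.
Qed.
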